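(* Every point of the interval $[m,M]$ is an accumulation point of $(b_n)_{n\ge1}$, where $m=\inf\{b_n:n\ge1\}$ and $M=\sup\{b_n:n\ge1\}$. In particular $(b_n)_{n\ge1}$ is dense in $[m,M]$ and its set of accumulation points is exactly $[m,M]$.
   Context: Fix integers $p\ge 3$ and $2\le s<p$, and a set $A\subset\{0,1,\dots,p-1\}$ with $\#A=s$. Let $h:\{0,1,\dots,s-1\}\to A$ be the unique strictly increasing bijection. For a positive integer $n$ with base-$s$ expansion $n=\sum_{i=0}^k\varepsilon_i s^i$ ($\varepsilon_i\in\{0,\dots,s-1\}$, $\varepsilon_k\ne 0$), put $a_n=\sum_{i=0}^k h(\varepsilon_i)p^i$. Let $b_n=a_n/n^{\log_s p}$ for $n\ge1$. An accumulation point of $(b_n)$ is a limit of $b_{n_k}$ along a strictly increasing sequence of indices $(n_k)$. *)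

From Stdlib Require Import Reals Lra Lia Arith List.
Open Scope R_scope.

(* Auxiliary recursion with fuel: for n >= 1 with base-s digits eps_0..eps_k,
   a_aux s p h fuel n = sum_{i=0}^k h(eps_i) p^i  provided fuel >= number of digits. *)
Fixpoint a_aux (s p : nat) (h : nat -> nat) (fuel n : nat) : nat :=
  match fuel with
  | O => O
  | S f => if Nat.eqb n 0 then O
           else (h (Nat.modulo n s) + p * a_aux s p h f (Nat.div n s))%nat
  end.

(* a_n = sum_i h(eps_i) p^i where n = sum_i eps_i s^i (fuel n is enough as s >= 2). *)
Definition a_seq (s p : nat) (h : nat -> nat) (n : nat) : nat := a_aux s p h n n.

Definition b_seq (s p : nat) (h : nat -> nat) (n : nat) : R :=
  INR (a_seq s p h n) / Rpower (INR n) (ln (INR p) / ln (INR s)).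

Definition acc_point (u : nat -> R) (x : R) : Prop :=
  exists phi : nat -> nat,
    (forall k, (phi k < phi (S k))%nat) /\ (forall k, (1 <= phi k)%nat) /\
    Un_cv (fun k => u (phi k)) x.

Definition range1 (u : nat -> R) (y : R) : Prop := exists n, (1 <= n)%nat /\ y = u n.

Definition is_glb (E : R -> Prop) (m : R) : Prop :=
  (forall y, E y -> m <= y) /\ (forall l, (forall y, E y -> l <= y) -> l <= m).

From Stdlib Require Import Reals List Lra Lia Classical ClassicalEpsilon.
Open Scope R_scope.

(* Let alpha = log_s p, so that b_n = a_n / n^alpha.  The sequence b is bounded by p, and
   appending the digit 0 does not decrease it (b_(n s) >= b_n), so a value exceeded once is
   exceeded at arbitrarily large indices.  Conversely b_(v s^k - 1) is at most
   b_v / (1 - alpha / (v s^k - 1)), so a value undershot once is undershot at arbitrarily large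
   indices.  Since a is increasing, b_(n+1) >= b_n - p alpha / n: the downward steps of b
   vanish.  A sequence crossing y downwards infinitely often with vanishing downward steps
   comes arbitrarily close to y; this makes every point of (m, M), hence of [m, M], an
   accumulation point. *)

Definition frequent_value (u : nat -> R) (x : R) : Prop :=
  forall eps, 0 < eps -> forall N, exists n, (N < n)%nat /\ Rabs (u n - x) < eps.

Lemma frequent_value_acc_point (u : nat -> R) (x : R) :
  frequent_value u x -> acc_point u x.
Proof.
  intros Hfreq.
  assert (Hnext : forall N k : nat, exists n, (N < n)%nat /\ Rabs (u n - x) < / (INR k + 1)).
  { intros N k. apply Hfreq, Rinv_0_lt_compat. pose proof (pos_INR k); lra. }
  set (next N k := proj1_sig (constructive_indefinite_description _ (Hnext N k))).
  assert (Hspec : forall N k, (N < next N k)%nat /\ Rabs (u (next N k) - x) < / (INR k + 1)).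
  { intros N k. exact (proj2_sig (constructive_indefinite_description _ (Hnext N k))). }
  set (phi := fix phi k := match k with O => next O O | S k' => next (phi k') (S k') end).
  assert (Hphi : forall k, Rabs (u (phi k) - x) < / (INR k + 1)) by (intros [|k]; apply Hspec).
  exists phi. split; [|split].
  - intro k. apply Hspec.
  - intros [|k]; [apply Hspec|]. pose proof (proj1 (Hspec (phi k) (S k))). simpl. lia.
  - intros eps Heps. destruct (INR_unbounded (/ eps)) as [k0 Hk0]. exists k0.
    intros k Hk. unfold R_dist. eapply Rlt_le_trans; [apply Hphi|].
    assert (INR k0 <= INR k) by (apply le_INR; lia).
    rewrite <- (Rinv_inv eps). apply Rinv_le_contravar.
    + apply Rinv_0_lt_compat; lra.
    + lra.
Qed.

Lemma acc_point_bounds (u : nat -> R) (m M x : R) :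
  (forall n, (1 <= n)%nat -> m <= u n <= M) -> acc_point u x -> m <= x <= M.
Proof.
  intros Hbd [phi [_ [Hphi1 Hcv]]].
  split; apply Rnot_lt_le; intro Hout.
  - destruct (Hcv (m - x)) as [k Hk]; [lra|].
    specialize (Hk k (le_n k)). unfold R_dist in Hk. apply Rabs_def2 in Hk.
    pose proof (Hbd _ (Hphi1 k)). lra.
  - destruct (Hcv (x - M)) as [k Hk]; [lra|].
    specialize (Hk k (le_n k)). unfold R_dist in Hk. apply Rabs_def2 in Hk.
    pose proof (Hbd _ (Hphi1 k)). lra.
Qed.

Lemma down_crossing (u : nat -> R) (y : R) (i j : nat) :
  (i <= j)%nat -> y <= u i -> u j < y ->
  exists n, (i <= n < j)%nat /\ y <= u n /\ u (S n) < y.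
Proof.
  induction j as [|j IH]; intros Hij Hi Hj.
  - replace i with 0%nat in Hi by lia. lra.
  - destruct (Nat.eq_dec i (S j)) as [->|Hne]; [lra|].
    destruct (Rlt_le_dec (u j) y) as [Hlt|Hle].
    + destruct (IH ltac:(lia) Hi Hlt) as [n [Hn Hcross]]. exists n. split; [lia|exact Hcross].
    + exists j. split; [lia|split; assumption].
Qed.

Lemma frequent_value_of_crossings (u : nat -> R) (y : R) :
  (forall eps, 0 < eps -> exists N, forall n, (N <= n)%nat -> u n - eps < u (S n)) ->
  (forall N, exists n, (N < n)%nat /\ y < u n) ->
  (forall N, exists n, (N < n)%nat /\ u n < y) ->
  frequent_value u y.
Proof.
  intros Hstep Habove Hbelow eps Heps N.
  destruct (Hstep eps Heps) as [N0 HN0].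
  destruct (Habove (N + N0)%nat) as [i [Hi Hui]].
  destruct (Hbelow i) as [j [Hj Huj]].
  destruct (down_crossing u y i j) as [n [Hn [Hun HuSn]]]; [lia|lra|exact Huj|].
  exists (S n). split; [lia|].
  pose proof (HN0 n ltac:(lia)). rewrite Rabs_left; lra.
Qed.

Lemma frequent_value_closed (u : nat -> R) (x : R) :
  (forall eps, 0 < eps -> exists y, Rabs (y - x) < eps /\ frequent_value u y) ->
  frequent_value u x.
Proof.
  intros Happrox eps Heps N.
  destruct (Happrox (eps / 2)) as [y [Hxy Hy]]; [lra|].
  destruct (Hy (eps / 2) ltac:(lra) N) as [n [Hn Huy]].
  exists n. split; [exact Hn|].
  replace (u n - x) with ((u n - y) + (y - x)) by ring.
  eapply Rle_lt_trans; [apply Rabs_triang|lra].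
Qed.

Lemma frequent_value_interval (u : nat -> R) (m M : R) :
  (forall n, (1 <= n)%nat -> m <= u n <= M) ->
  (forall y, m < y < M -> frequent_value u y) ->
  forall x, m <= x <= M -> frequent_value u x.
Proof.
  intros Hbd Hint x Hx.
  destruct (Rle_lt_or_eq_dec m M) as [Hlt|Heq]; [pose proof (Hbd 1%nat (le_n 1)); lra| |].
  - apply frequent_value_closed. intros eps Heps.
    set (t := Rmin (eps / 2) ((M - m) / 4)).
    assert (0 < t) by (apply Rmin_glb_lt; lra).
    assert (t <= eps / 2) by apply Rmin_l.
    assert (t <= (M - m) / 4) by apply Rmin_r.
    destruct (Rlt_le_dec x ((m + M) / 2)).
    + exists (x + t). split; [rewrite Rabs_right; lra|apply Hint; lra].
    + exists (x - t). split; [rewrite Rabs_left; lra|apply Hint; lra].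
  - intros eps Heps N. exists (S N). split; [lia|].
    pose proof (Hbd (S N) ltac:(lia)). replace (u (S N) - x) with 0 by lra.
    rewrite Rabs_R0. exact Heps.
Qed.

Lemma glb_exists (E : R -> Prop) :
  (exists l, forall y, E y -> l <= y) -> (exists x, E x) -> exists m, is_glb E m.
Proof.
  intros [l Hl] [x Hx].
  destruct (upper_bound_thm (fun z => E (- z))) as [M [HM1 HM2]].
  - exists (- l). intros z Hz. specialize (Hl _ Hz). lra.
  - exists (- x). rewrite Ropp_involutive. exact Hx.
  - exists (- M). split.
    + intros y Hy. assert (- y <= M); [apply HM1; rewrite Ropp_involutive; exact Hy|lra].
    + intros l' Hl'. assert (M <= - l'); [|lra].
      apply HM2. intros z Hz. specialize (Hl' _ Hz). lra.
Qed.

Lemma lub_approx (E : R -> Prop) (M y : R) : is_lub E M -> y < M -> exists x, E x /\ y < x.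
Proof.
  intros [_ HM] Hy. apply NNPP. intro Hnone.
  assert (M <= y); [|lra]. apply HM. intros x Hx. apply Rnot_lt_le. intro Hlt.
  apply Hnone. exists x. split; assumption.
Qed.

Lemma glb_approx (E : R -> Prop) (m y : R) : is_glb E m -> m < y -> exists x, E x /\ x < y.
Proof.
  intros [_ Hm] Hy. apply NNPP. intro Hnone.
  assert (y <= m); [|lra]. apply Hm. intros x Hx. apply Rnot_lt_le. intro Hlt.
  apply Hnone. exists x. split; assumption.
Qed.

Lemma ln_ge_1_sub_inv (x : R) : 0 < x -> 1 - / x <= ln x.
Proof.
  intros Hx. assert (Hinv : 0 < / x) by (apply Rinv_0_lt_compat; exact Hx).
  apply Rnot_lt_le. intro Hlt.
  assert (Hexp : exp (/ x - 1) < exp (ln (/ x))) by (apply exp_increasing; rewrite ln_Rinv; lra).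
  rewrite exp_ln in Hexp by exact Hinv. pose proof (exp_ineq1_le (/ x - 1)). lra.
Qed.

Section Sequence.
Variables (s p : nat) (h : nat -> nat).
Hypothesis Hs2 : (2 <= s)%nat.
Hypothesis Hsp : (s < p)%nat.
Hypothesis Hh_inc : forall i j, (i < j)%nat -> (j < s)%nat -> (h i < h j)%nat.
Hypothesis Hh_lt_p : forall i, (i < s)%nat -> (h i < p)%nat.

Notation a := (a_seq s p h).
Notation b := (b_seq s p h).

Lemma a_aux_fuel (f g n : nat) :
  (n <= f)%nat -> (n <= g)%nat -> a_aux s p h f n = a_aux s p h g n.
Proof.
  revert g n. induction f as [|f IH]; intros g n Hf Hg.
  - replace n with 0%nat by lia. destruct g; reflexivity.
  - destruct g as [|g]; [replace n with 0%nat by lia; reflexivity|].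
    simpl. destruct (Nat.eqb_spec n 0) as [_|Hn]; [reflexivity|].
    assert (n / s < n)%nat by (apply Nat.div_lt; lia).
    rewrite (IH g); [reflexivity|lia|lia].
Qed.

(* The junk value [a 0 = 0] is why [q * s + d] must be positive. *)
Lemma a_seq_digit (q d : nat) :
  (d < s)%nat -> (1 <= q * s + d)%nat -> a (q * s + d) = (h d + p * a q)%nat.
Proof.
  intros Hd Hn. unfold a_seq.
  assert (Hmod : ((q * s + d) mod s = d)%nat) by (symmetry; apply (Nat.mod_unique _ _ q); lia).
  assert (Hdiv : ((q * s + d) / s = q)%nat) by (symmetry; apply (Nat.div_unique _ _ _ d); lia).
  destruct (q * s + d)%nat as [|n] eqn:Hqd; [lia|].
  simpl a_aux at 1. rewrite Hmod, Hdiv.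
  rewrite (a_aux_fuel n q); [reflexivity|nia|lia].
Qed.

Lemma a_seq_increment (v : nat) : ((p - 1) * a v + h (s - 1) <= (p - 1) * a (S v))%nat.
Proof.
  induction v as [v IH] using (well_founded_induction Wf_nat.lt_wf).
  assert (Hlast : (h (s - 1) < p)%nat) by (apply Hh_lt_p; lia).
  destruct (Nat.eq_dec v 0) as [->|Hv0].
  - pose proof (a_seq_digit 0 1 ltac:(lia) ltac:(lia)) as Ha1. simpl in Ha1.
    rewrite Ha1. assert (h 0 < h 1)%nat by (apply Hh_inc; lia).
    change (a 0) with 0%nat. nia.
  - pose proof (Nat.div_mod_eq v s) as Hdm.
    pose proof (Nat.mod_upper_bound v s ltac:(lia)) as Hmod.
    set (q := (v / s)%nat) in *. set (d := (v mod s)%nat) in *.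
    replace v with (q * s + d)%nat by lia.
    rewrite a_seq_digit by lia.
    destruct (Nat.eq_dec d (s - 1)) as [Hd|Hd].
    + replace (S (q * s + d)) with (S q * s + 0)%nat by nia.
      rewrite a_seq_digit by nia.
      assert (Hq : (q < v)%nat) by (apply Nat.div_lt; lia).
      specialize (IH q Hq). rewrite Hd. nia.
    + replace (S (q * s + d)) with (q * s + S d)%nat by lia.
      rewrite a_seq_digit by lia.
      assert (h d < h (S d))%nat by (apply Hh_inc; lia). nia.
Qed.

Lemma a_seq_lt_succ (v : nat) : (a v < a (S v))%nat.
Proof.
  pose proof (a_seq_increment v).
  assert (h 0 < h (s - 1))%nat by (apply Hh_inc; lia).
  assert (h (s - 1) < p)%nat by (apply Hh_lt_p; lia). nia.
Qed.

Lemma a_seq_mul_pow_pred_increment (v k : nat) : (1 <= v)%nat ->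
  ((p - 1) * a (v * s ^ k - 1) + h (s - 1) <= p ^ k * ((p - 1) * a v))%nat.
Proof.
  intros Hv. induction k as [|k IH].
  - rewrite Nat.pow_0_r, Nat.mul_1_r, Nat.mul_1_l.
    pose proof (a_seq_increment (v - 1)) as Hinc. replace (S (v - 1)) with v in Hinc by lia.
    exact Hinc.
  - assert (1 <= s ^ k)%nat by (apply Nat.neq_0_lt_0, Nat.pow_nonzero; lia).
    replace (v * s ^ S k - 1)%nat with ((v * s ^ k - 1) * s + (s - 1))%nat
      by (rewrite Nat.pow_succ_r'; nia).
    rewrite a_seq_digit by nia. rewrite Nat.pow_succ_r'. nia.
Qed.

(* In base [s], [v * s ^ k - 1] is [v - 1] followed by [k] maximal digits. *)
Lemma a_seq_mul_pow_pred (v k : nat) : (1 <= v)%nat -> (a (v * s ^ k - 1) <= p ^ k * a v)%nat.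
Proof.
  intros Hv. pose proof (a_seq_mul_pow_pred_increment v k Hv).
  assert (h 0 < h (s - 1) < p)%nat by (split; [apply Hh_inc|apply Hh_lt_p]; lia).
  apply (Nat.mul_le_mono_pos_l _ _ (p - 1)); [lia|].
  rewrite Nat.mul_assoc, (Nat.mul_comm (p - 1)), <- Nat.mul_assoc. lia.
Qed.

Definition expo : R := ln (INR p) / ln (INR s).
Definition scale (n : nat) : R := Rpower (INR n) expo.

Lemma INR_s_gt_1 : 1 < INR s.
Proof. apply lt_1_INR. lia. Qed.

Lemma expo_pos : 0 < expo.
Proof.
  assert (1 < INR p) by (apply lt_1_INR; lia). pose proof INR_s_gt_1.
  unfold expo. apply Rdiv_lt_0_compat; rewrite <- ln_1; apply ln_increasing; lra.
Qed.

Lemma scale_pos (n : nat) : 0 < scale n.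
Proof. apply exp_pos. Qed.

Lemma scale_le (m n : nat) : (1 <= m <= n)%nat -> scale m <= scale n.
Proof.
  intros Hmn. apply Rle_Rpower_l; [left; apply expo_pos|split].
  - apply lt_0_INR. lia.
  - apply le_INR. lia.
Qed.

Lemma scale_ge_1 (n : nat) : (1 <= n)%nat -> 1 <= scale n.
Proof.
  intros Hn. replace 1 with (scale 1) by (unfold scale, Rpower; simpl; rewrite ln_1, Rmult_0_r; apply exp_0).
  apply scale_le. lia.
Qed.

Lemma scale_mul_s (q : nat) : (1 <= q)%nat -> scale (q * s) = INR p * scale q.
Proof.
  intros Hq. unfold scale. rewrite mult_INR, <- Rpower_mult_distr.
  - pose proof INR_s_gt_1. unfold expo. fold (Rlog (INR s) (INR p)).
    rewrite Rpower_Rlog; [ring|lra|lra|apply lt_0_INR; lia].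
  - apply lt_0_INR. lia.
  - pose proof INR_s_gt_1. lra.
Qed.

Lemma scale_mul_pow (v k : nat) : (1 <= v)%nat -> scale (v * s ^ k) = INR p ^ k * scale v.
Proof.
  intros Hv. induction k as [|k IH].
  - rewrite Nat.pow_0_r, Nat.mul_1_r. simpl. ring.
  - assert (1 <= s ^ k)%nat by (apply Nat.neq_0_lt_0, Nat.pow_nonzero; lia).
    replace (v * s ^ S k)%nat with (v * s ^ k * s)%nat by (rewrite Nat.pow_succ_r'; ring).
    rewrite scale_mul_s, IH by nia. simpl. ring.
Qed.

(* [scale n / scale (n + 1) = exp (expo * ln (n / (n + 1)))] and [exp t >= 1 + t]. *)
Lemma scale_succ_ratio (n : nat) : (1 <= n)%nat -> (1 - expo / INR n) * scale (S n) <= scale n.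
Proof.
  intros Hn. assert (Hn0 : 0 < INR n) by (apply lt_0_INR; lia).
  assert (HSn : INR (S n) = INR n + 1) by apply S_INR.
  assert (Hq : 0 < INR n / INR (S n)) by (rewrite HSn; apply Rdiv_lt_0_compat; lra).
  unfold scale.
  replace (Rpower (INR n) expo) with (Rpower (INR n / INR (S n)) expo * Rpower (INR (S n)) expo)
    by (rewrite Rpower_mult_distr by lra; f_equal; field; lra).
  apply Rmult_le_compat_r; [left; apply exp_pos|].
  eapply Rle_trans; [|apply exp_ineq1_le].
  pose proof (ln_ge_1_sub_inv _ Hq) as Hln.
  replace (/ (INR n / INR (S n))) with (1 + / INR n) in Hln by (rewrite HSn; field; lra).
  pose proof expo_pos. unfold Rdiv at 1.
  assert (expo * (- / INR n) <= expo * ln (INR n / INR (S n))) by (apply Rmult_le_compat_l; lra).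
  lra.
Qed.

Lemma b_mul_scale (n : nat) : b n * scale n = INR (a n).
Proof. unfold b_seq. fold expo. fold (scale n). pose proof (scale_pos n). field. lra. Qed.

Lemma b_nonneg (n : nat) : 0 <= b n.
Proof.
  unfold b_seq. apply Rmult_le_pos; [apply pos_INR|].
  left. apply Rinv_0_lt_compat, scale_pos.
Qed.

Lemma a_seq_add1_le_p_scale (n : nat) : (1 <= n)%nat -> INR (a n) + 1 <= INR p * scale n.
Proof.
  induction n as [n IH] using (well_founded_induction Wf_nat.lt_wf). intros Hn.
  pose proof (Nat.div_mod_eq n s) as Hdm.
  pose proof (Nat.mod_upper_bound n s ltac:(lia)) as Hmod.
  set (q := (n / s)%nat) in *. set (d := (n mod s)%nat) in *.
  assert (Hd : INR (h d) + 1 <= INR p)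
    by (rewrite <- S_INR; apply le_INR, Hh_lt_p; exact Hmod).
  replace n with (q * s + d)%nat in * by lia.
  rewrite a_seq_digit, plus_INR, mult_INR by lia.
  pose proof (scale_ge_1 _ Hn). assert (0 <= INR p) by apply pos_INR.
  destruct (Nat.eq_dec q 0) as [->|Hq].
  - change (a 0) with 0%nat. simpl INR. nra.
  - assert (Hqn : (q < q * s + d)%nat) by nia.
    specialize (IH q Hqn ltac:(lia)).
    assert (Hsc : scale (q * s) <= scale (q * s + d)) by (apply scale_le; nia).
    rewrite scale_mul_s in Hsc by lia. nra.
Qed.

Lemma b_le_p (n : nat) : (1 <= n)%nat -> b n <= INR p.
Proof.
  intros Hn. apply (Rmult_le_reg_r (scale n)); [apply scale_pos|].
  rewrite b_mul_scale. pose proof (a_seq_add1_le_p_scale n Hn). lra.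
Qed.

Lemma b_le_b_mul_s (q : nat) : (1 <= q)%nat -> b q <= b (q * s).
Proof.
  intros Hq. apply (Rmult_le_reg_r (scale (q * s))); [apply scale_pos|].
  rewrite b_mul_scale, scale_mul_s by lia.
  replace (q * s)%nat with (q * s + 0)%nat by lia.
  rewrite a_seq_digit, plus_INR, mult_INR, <- b_mul_scale by nia.
  pose proof (pos_INR (h 0)). lra.
Qed.

Lemma b_le_b_mul_pow (q k : nat) : (1 <= q)%nat -> b q <= b (q * s ^ k).
Proof.
  intros Hq. induction k as [|k IH].
  - rewrite Nat.pow_0_r, Nat.mul_1_r. lra.
  - assert (1 <= s ^ k)%nat by (apply Nat.neq_0_lt_0, Nat.pow_nonzero; lia).
    replace (q * s ^ S k)%nat with (q * s ^ k * s)%nat by (rewrite Nat.pow_succ_r'; ring).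
    eapply Rle_trans; [apply IH|apply b_le_b_mul_s; nia].
Qed.

Lemma b_succ_ge (n : nat) : (1 <= n)%nat -> b n - INR p * expo / INR n <= b (S n).
Proof.
  intros Hn. assert (Hn0 : 0 < INR n) by (apply lt_0_INR; lia).
  assert (Hdrop : b n * (1 - expo / INR n) <= b (S n)).
  { apply (Rmult_le_reg_r (scale (S n))); [apply scale_pos|].
    pose proof (scale_succ_ratio n Hn). pose proof (b_nonneg n).
    pose proof (lt_INR _ _ (a_seq_lt_succ n)) as Hlt.
    rewrite <- !b_mul_scale in Hlt. nra. }
  assert (b n * (expo / INR n) <= INR p * (expo / INR n)).
  { apply Rmult_le_compat_r; [|apply b_le_p; exact Hn].
    left. apply Rdiv_lt_0_compat; [apply expo_pos|exact Hn0]. }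
  unfold Rdiv in *. lra.
Qed.

Lemma b_mul_pow_pred_le (v k : nat) : (1 <= v)%nat -> (1 <= v * s ^ k - 1)%nat ->
  b (v * s ^ k - 1) * (1 - expo / INR (v * s ^ k - 1)) <= b v.
Proof.
  intros Hv Hw. set (w := (v * s ^ k - 1)%nat) in *.
  pose proof (scale_succ_ratio w Hw) as Hratio.
  replace (S w) with (v * s ^ k)%nat in Hratio by (unfold w; lia).
  rewrite scale_mul_pow in Hratio by exact Hv.
  pose proof (le_INR _ _ (a_seq_mul_pow_pred v k Hv)) as Ha.
  rewrite mult_INR, pow_INR, <- !b_mul_scale in Ha. fold w in Ha.
  assert (0 < INR p ^ k) by (apply pow_lt, lt_0_INR; lia).
  pose proof (b_nonneg w). pose proof (scale_pos v).
  apply (Rmult_le_reg_r (INR p ^ k * scale v)); [apply Rmult_lt_0_compat; assumption|].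
  nra.
Qed.

Lemma b_steps_small (eps : R) : 0 < eps ->
  exists N, forall n, (N <= n)%nat -> b n - eps < b (S n).
Proof.
  intros Heps. pose proof expo_pos.
  assert (Hc : 0 <= INR p * expo) by (apply Rmult_le_pos; [apply pos_INR|lra]).
  destruct (INR_unbounded (INR p * expo / eps)) as [N HN].
  exists (S N). intros n Hn.
  assert (Hn0 : INR N < INR n) by (apply lt_INR; lia).
  assert (0 < INR n) by (pose proof (pos_INR N); lra).
  assert (Hbound : INR p * expo < eps * INR n).
  { replace (INR p * expo) with (INR p * expo / eps * eps) by (field; lra). nra. }
  assert (INR p * expo / INR n < eps).
  { apply (Rmult_lt_reg_r (INR n)); [lra|].
    unfold Rdiv. rewrite Rmult_assoc, Rinv_l by lra. lra. }
  pose proof (b_succ_ge n ltac:(lia)). lra.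
Qed.

Lemma b_above_infinitely (n0 : nat) (y : R) : (1 <= n0)%nat -> y < b n0 ->
  forall N, exists n, (N < n)%nat /\ y < b n.
Proof.
  intros Hn0 Hy N. exists (n0 * s ^ N)%nat. split.
  - pose proof (Nat.pow_gt_lin_r s N ltac:(lia)). nia.
  - pose proof (b_le_b_mul_pow n0 N Hn0). lra.
Qed.

Lemma b_below_infinitely (n0 : nat) (y : R) : (1 <= n0)%nat -> b n0 < y ->
  forall N, exists n, (N < n)%nat /\ b n < y.
Proof.
  intros Hn0 Hy N. pose proof expo_pos.
  pose proof (b_nonneg n0).
  set (c := y * expo / (y - b n0)).
  assert (0 <= c) by (apply Rmult_le_pos; [apply Rmult_le_pos|left; apply Rinv_0_lt_compat]; lra).
  destruct (INR_unbounded (c + expo + INR N)) as [k Hk].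
  set (w := (n0 * s ^ k - 1)%nat).
  assert (Hkw : (k <= w)%nat) by (pose proof (Nat.pow_gt_lin_r s k ltac:(lia)); unfold w; nia).
  apply le_INR in Hkw. pose proof (pos_INR N).
  exists w. split; [apply INR_lt; lra|].
  apply Rnot_le_lt. intro Hyw.
  pose proof (b_mul_pow_pred_le n0 k Hn0) as Hw.
  fold w in Hw. specialize (Hw ltac:(apply INR_lt; simpl; lra)).
  assert (Hfac : 0 <= 1 - expo / INR w).
  { assert (expo / INR w <= 1); [|lra].
    apply (Rmult_le_reg_r (INR w)); [lra|]. unfold Rdiv. rewrite Rmult_assoc, Rinv_l by lra. lra. }
  assert (Hcw : y * expo < INR w * (y - b n0)).
  { apply (Rmult_lt_reg_r (/ (y - b n0))); [apply Rinv_0_lt_compat; lra|].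
    replace (INR w * (y - b n0) * / (y - b n0)) with (INR w) by (field; lra).
    unfold c, Rdiv in Hk. lra. }
  assert (y * (1 - expo / INR w) <= b n0) by (eapply Rle_trans; [|exact Hw]; apply Rmult_le_compat_r; lra).
  assert (y * (1 - expo / INR w) * INR w = y * INR w - y * expo) by (field; lra).
  nra.
Qed.

Lemma b_frequent_between (i j : nat) (y : R) : (1 <= i)%nat -> (1 <= j)%nat ->
  b i < y < b j -> frequent_value b y.
Proof.
  intros Hi Hj [Hiy Hyj]. apply frequent_value_of_crossings.
  - exact b_steps_small.
  - exact (b_above_infinitely j y Hj Hyj).
  - exact (b_below_infinitely i y Hi Hiy).
Qed.

End Sequence.

Theorem theorem2 (p s : nat) (A : list nat) (h : nat -> nat)
  (Hp : (3 <= p)%nat) (Hs2 : (2 <= s)%nat) (Hsp : (s < p)%nat)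
  (HAnd : NoDup A) (HAlen : length A = s) (HAp : forall a, In a A -> (a < p)%nat)
  (Hh_inc : forall i j, (i < j)%nat -> (j < s)%nat -> (h i < h j)%nat)
  (Hh_A : forall i, (i < s)%nat -> In (h i) A) :
  exists m M : R,
    is_glb (range1 (b_seq s p h)) m /\ is_lub (range1 (b_seq s p h)) M /\
    (forall x, m <= x <= M -> acc_point (b_seq s p h) x) /\
    (forall x, acc_point (b_seq s p h) x -> m <= x <= M) /\
    (forall x eps, m <= x <= M -> 0 < eps ->
       exists n, (1 <= n)%nat /\ Rabs (b_seq s p h n - x) < eps).
Proof.
  assert (Hh_lt_p : forall i, (i < s)%nat -> (h i < p)%nat) by (intros; apply HAp, Hh_A; assumption).
  set (b := b_seq s p h).
  assert (Hb1 : range1 b (b 1%nat)) by (exists 1%nat; split; [lia|reflexivity]).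
  destruct (upper_bound_thm (range1 b)) as [M HM].
  { exists (INR p). intros y [n [Hn ->]]. apply (b_le_p s p h Hs2 Hsp Hh_lt_p n Hn). }
  { exists (b 1%nat). exact Hb1. }
  destruct (glb_exists (range1 b)) as [m Hm].
  { exists 0. intros y [n [_ ->]]. apply b_nonneg. }
  { exists (b 1%nat). exact Hb1. }
  assert (Hbd : forall n, (1 <= n)%nat -> m <= b n <= M).
  { intros n Hn. split; [apply Hm|apply HM]; exists n; split; [exact Hn|reflexivity|exact Hn|reflexivity]. }
  assert (Hfreq : forall x, m <= x <= M -> frequent_value b x).
  { apply (frequent_value_interval b m M Hbd). intros y [Hmy HyM].
    destruct (glb_approx _ _ _ Hm Hmy) as [z [[i [Hi ->]] Hiy]].
    destruct (lub_approx _ _ _ HM HyM) as [z [[j [Hj ->]] Hyj]].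
    exact (b_frequent_between s p h Hs2 Hsp Hh_inc Hh_lt_p i j y Hi Hj (conj Hiy Hyj)). }
  exists m, M. split; [exact Hm|]. split; [exact HM|]. split; [|split].
  - intros x Hx. apply frequent_value_acc_point, Hfreq, Hx.
  - intros x. apply acc_point_bounds, Hbd.
  - intros x eps Hx Heps. destruct (Hfreq x Hx eps Heps 0%nat) as [n [Hn Hclose]].
    exists n. split; [lia|exact Hclose].
Qed.
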